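(* Let $f_{ijk}$ be a triangle face with radii $r_i,r_j,r_k>0$ at its vertices and inversive distances $a=I_{jk}$, $b=I_{ki}$, $c=I_{ij}$, all $>1$, and suppose the edge lengths $l_{ij}=\sqrt{r_i^2+r_j^2+2I_{ij}r_ir_j}$ (and similarly $l_{jk},l_{ki}$) satisfy the triangle inequality. Realize $f_{ijk}$ as a Euclidean triangle in $\mathbb{E}^2$ with these side lengths, and let $\rho_{ijk}$ be the radius of the unique circle orthogonal to the three circles centered at $v_i,v_j,v_k$ with radii $r_i,r_j,r_k$. Then \[r_ir_jr_k\sqrt{\Delta_{abc}}=2\rho_{ijk}\operatorname{Area}(f_{ijk}),\qquad \Delta_{abc}=a^2+b^2+c^2+2abc-1.\]
   Context: The inversive distance of two circles with radii $r_1,r_2$ whose centers are at distance $l$ is $(l^2-r_1^2-r_2^2)/(2r_1r_2)$. *)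

From HB Require Import structures.
From mathcomp Require Import all_boot all_order all_algebra.
Set Implicit Arguments. Unset Strict Implicit. Unset Printing Implicit Defensive.
Import Order.TTheory GRing.Theory Num.Theory.
Local Open Scope ring_scope.

Section Defs.
Variable R : rcfType.

Definition dist2 (p q : R * R) : R := (p.1 - q.1) ^+ 2 + (p.2 - q.2) ^+ 2.
Definition dist (p q : R * R) : R := Num.sqrt (dist2 p q).

Definition edge_length (ri rj I : R) : R :=
  Num.sqrt (ri ^+ 2 + rj ^+ 2 + 2 * I * ri * rj).

Definition inversive_distance (c1 : R * R) (r1 : R) (c2 : R * R) (r2 : R) : R :=
  (dist2 c1 c2 - r1 ^+ 2 - r2 ^+ 2) / (2 * r1 * r2).

Definition orthogonal_circles (c1 : R * R) (r1 : R) (c2 : R * R) (r2 : R) : Prop :=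
  dist2 c1 c2 = r1 ^+ 2 + r2 ^+ 2.

Definition triangle_area (p q s : R * R) : R :=
  `| (q.1 - p.1) * (s.2 - p.2) - (s.1 - p.1) * (q.2 - p.2) | / 2.

Definition Delta_abc (a b c : R) : R := a ^+ 2 + b ^+ 2 + c ^+ 2 + 2 * a * b * c - 1.

End Defs.

From HB Require Import structures.
From mathcomp Require Import all_boot all_order all_algebra.
From mathcomp Require Import ring lra.
Import Order.TTheory GRing.Theory Num.Theory.
Set Implicit Arguments. Unset Strict Implicit.
Local Open Scope ring_scope.

(* The circle orthogonal to the three vertex circles is centred at their
   radical centre p, and rho^2 is the common power of p.  Writing the
   inner products of the vectors from v_i to v_j, v_k and p through
   squared distances (polarization), the Gram identity for three vectors
   in the plane gives rho^2 * (2 Area)^2 = (r_i r_j r_k)^2 Delta_abc; taking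
   square roots yields the formula.  The strict triangle inequalities make
   the triangle non-degenerate (Heron), which is what makes the radical
   centre exist, and Delta_abc > 0 then forces its power to be positive. *)

Section OrthogonalCircle.
Variable R : rcfType.
Implicit Types (p q s v : R * R) (r : R).

Definition orient p q s : R :=
  (q.1 - p.1) * (s.2 - p.2) - (s.1 - p.1) * (q.2 - p.2).

Definition power p v r : R := dist2 p v - r ^+ 2.

Lemma triangle_areaE p q s : triangle_area p q s = `|orient p q s| / 2.
Proof. by []. Qed.

Lemma orthogonal_circlesE p rho v r :
  orthogonal_circles p rho v r <-> power p v r = rho ^+ 2.
Proof.
by rewrite /orthogonal_circles /power; split=> [->|<-]; rewrite ?addrK ?subrK.
Qed.

Lemma dist2_ge0 p q : 0 <= dist2 p q.
Proof. by rewrite addr_ge0 ?sqr_ge0. Qed.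

Lemma sqr_dist p q : dist p q ^+ 2 = dist2 p q.
Proof. exact/sqr_sqrtr/dist2_ge0. Qed.

Lemma dist2_edge_length p q ri rj I : 0 <= ri -> 0 <= rj -> 0 <= I ->
  dist p q = edge_length ri rj I -> dist2 p q = ri ^+ 2 + rj ^+ 2 + 2 * I * ri * rj.
Proof.
move=> ri0 rj0 I0 dpq; rewrite -sqr_dist dpq sqr_sqrtr //.
by rewrite !addr_ge0 ?sqr_ge0 ?mulr_ge0.
Qed.

Lemma orient_sqr p q s :
  4 * orient p q s ^+ 2 =
  4 * dist2 p q * dist2 s p - (dist2 p q + dist2 s p - dist2 q s) ^+ 2.
Proof. by rewrite /orient /dist2; ring. Qed.

Lemma heron p q s :
  4 * orient p q s ^+ 2 =
  (dist p q + dist q s + dist s p) * (- dist p q + dist q s + dist s p) *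
  (dist p q - dist q s + dist s p) * (dist p q + dist q s - dist s p).
Proof. by rewrite orient_sqr -!sqr_dist; ring. Qed.

Lemma orient_neq0 p q s :
  dist p q < dist q s + dist s p -> dist q s < dist s p + dist p q ->
  dist s p < dist p q + dist q s -> orient p q s != 0.
Proof.
move=> Tpq Tqs Tsp.
have : 0 < 4 * orient p q s ^+ 2 by rewrite heron !mulr_gt0 //; lra.
by apply: contraTneq => ->; rewrite expr0n mulr0 ltxx.
Qed.

(* Gram identity |y|^2 (u x w)^2 = (y.u)^2 |w|^2 - 2 (y.u)(y.w)(u.w) + (y.w)^2 |u|^2
   for y = x - p, u = q - p, w = s - p, with every inner product polarized. *)
Lemma dist2_orient_sqr p q s x :
  let xu := dist2 x p + dist2 p q - dist2 x q in
  let xw := dist2 x p + dist2 s p - dist2 x s in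
  let uw := dist2 p q + dist2 s p - dist2 q s in
  4 * dist2 x p * orient p q s ^+ 2 =
  xu ^+ 2 * dist2 s p - xu * xw * uw + xw ^+ 2 * dist2 p q.
Proof. by rewrite /orient /dist2 /=; ring. Qed.

Lemma power_orient_sqr vi vj vk p ri rj rk a b c P :
  dist2 vi vj = ri ^+ 2 + rj ^+ 2 + 2 * c * ri * rj ->
  dist2 vj vk = rj ^+ 2 + rk ^+ 2 + 2 * a * rj * rk ->
  dist2 vk vi = rk ^+ 2 + ri ^+ 2 + 2 * b * rk * ri ->
  power p vi ri = P -> power p vj rj = P -> power p vk rk = P ->
  P * orient vi vj vk ^+ 2 = (ri * rj * rk) ^+ 2 * Delta_abc a b c.
Proof.
move=> Eij Ejk Eki Pi Pj Pk.
have dist2_power v r : power p v r = P -> dist2 p v = P + r ^+ 2.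
  by move=> <-; rewrite subrK.
have G := dist2_orient_sqr vi vj vk p; have L := orient_sqr vi vj vk.
rewrite /= (dist2_power _ _ Pi) (dist2_power _ _ Pj) (dist2_power _ _ Pk) in G L.
rewrite Eij Ejk Eki in G L.
(* P = |p - v_i|^2 - r_i^2: subtract r_i^2 times orient_sqr from the Gram identity *)
have E : 4 * (P * orient vi vj vk ^+ 2) =
  4 * (P + ri ^+ 2) * orient vi vj vk ^+ 2 - ri ^+ 2 * (4 * orient vi vj vk ^+ 2).
  by ring.
apply: (@mulfI _ 4); first by rewrite pnatr_eq0.
by rewrite /= E G L /Delta_abc; ring.
Qed.

Lemma radical_center_exists vi vj vk ri rj rk : orient vi vj vk != 0 ->
  exists p, power p vj rj = power p vi ri /\ power p vk rk = power p vi ri.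
Proof.
case: vi vj vk => [i1 i2] [j1 j2] [k1 k2]; rewrite /orient /= => D0.
set D := _ - _ in D0.
set al := ((j1 - i1) ^+ 2 + (j2 - i2) ^+ 2 + ri ^+ 2 - rj ^+ 2) / 2.
set be := ((k1 - i1) ^+ 2 + (k2 - i2) ^+ 2 + ri ^+ 2 - rk ^+ 2) / 2.
(* the centre is v_i + x, with x solving x . (v_j - v_i) = al and
   x . (v_k - v_i) = be by Cramer's rule *)
exists (i1 + (al * (k2 - i2) - be * (j2 - i2)) / D,
        i2 + (be * (j1 - i1) - al * (k1 - i1)) / D).
by rewrite /power /dist2 /al /be /D /=; split; field.
Qed.

Lemma Delta_abc_gt0 (a b c : R) : 1 < a -> 0 <= b -> 0 <= c -> 0 < Delta_abc a b c.
Proof.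
move=> a1 b0 c0; rewrite /Delta_abc.
have a0 : 0 < a := lt_trans ltr01 a1.
have a2 : 1 < a ^+ 2 by rewrite expr_gt1 // ltW.
have : 0 <= 2 * a * b * c by rewrite !mulr_ge0 // ltW.
by have := sqr_ge0 b; have := sqr_ge0 c; lra.
Qed.

End OrthogonalCircle.

Theorem theorem4p1 (R : rcfType) (ri rj rk a b c : R) (vi vj vk : R * R) :
  0 < ri -> 0 < rj -> 0 < rk ->
  1 < a -> 1 < b -> 1 < c ->
  (* a = I_jk, b = I_ki, c = I_ij; strict triangle inequalities for the edge lengths *)
  edge_length ri rj c < edge_length rj rk a + edge_length rk ri b ->
  edge_length rj rk a < edge_length rk ri b + edge_length ri rj c ->
  edge_length rk ri b < edge_length ri rj c + edge_length rj rk a ->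
  (* vi vj vk realize f_ijk in E^2 with these side lengths *)
  dist vi vj = edge_length ri rj c ->
  dist vj vk = edge_length rj rk a ->
  dist vk vi = edge_length rk ri b ->
  (* a circle orthogonal to the three vertex circles exists ... *)
  (exists (p : R * R) (rho : R), 0 < rho /\
     orthogonal_circles p rho vi ri /\ orthogonal_circles p rho vj rj /\
     orthogonal_circles p rho vk rk) /\
  (* ... and for any such circle of radius rho_ijk the identity holds *)
  (forall (p : R * R) (rho : R), 0 < rho ->
     orthogonal_circles p rho vi ri -> orthogonal_circles p rho vj rj ->
     orthogonal_circles p rho vk rk ->
     ri * rj * rk * Num.sqrt (Delta_abc a b c) = 2 * rho * triangle_area vi vj vk).
Proof.
move=> ri0 rj0 rk0 a1 b1 c1 Tij Tjk Tki dij djk dki.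
have ge0 (x : R) : 1 < x -> 0 <= x by move=> /(lt_trans ltr01)/ltW.
have Eij := dist2_edge_length (ltW ri0) (ltW rj0) (ge0 c c1) dij.
have Ejk := dist2_edge_length (ltW rj0) (ltW rk0) (ge0 a a1) djk.
have Eki := dist2_edge_length (ltW rk0) (ltW ri0) (ge0 b b1) dki.
rewrite -dij -djk -dki in Tij Tjk Tki.
have O0 := orient_neq0 Tij Tjk Tki.
have rrr0 : 0 < (ri * rj * rk) ^+ 2 * Delta_abc a b c.
  by rewrite mulr_gt0 ?exprn_gt0 ?mulr_gt0 // Delta_abc_gt0 // ge0.
split.
  have [p [Pj Pk]] := radical_center_exists ri rj rk O0.
  have K := power_orient_sqr Eij Ejk Eki erefl Pj Pk.
  have P0 : 0 < power p vi ri by move: rrr0; rewrite -K pmulr_lgt0 // exprn_even_gt0.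
  exists p, (Num.sqrt (power p vi ri)).
  by rewrite sqrtr_gt0 !orthogonal_circlesE sqr_sqrtr ?ltW.
move=> p rho rho0 /orthogonal_circlesE Pi /orthogonal_circlesE Pj /orthogonal_circlesE Pk.
have K := power_orient_sqr Eij Ejk Eki Pi Pj Pk.
have -> : 2 * rho * triangle_area vi vj vk = Num.sqrt ((rho * orient vi vj vk) ^+ 2).
  by rewrite sqrtr_sqr normrM (gtr0_norm rho0) triangle_areaE; field.
by rewrite exprMn K sqrtrM ?sqr_ge0 // sqrtr_sqr gtr0_norm ?mulr_gt0.
Qed.
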